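(* Let $n=em$ with $e,m\geq1$ integers, let $k$ be a positive integer, let $\alpha,\beta\in\mathbb{F}_{2^e}^*$ with $\beta=\alpha^2$, and let $c_i\in\mathbb{F}_2$ for $1\leq i\leq\lfloor\frac{m-1}{2}\rfloor$. Define $f_Q:\mathbb{F}_{2^n}\to\mathbb{F}_2$ by $$f_Q(x)=p(\alpha x)+\sum_{i=1}^{\lfloor\frac{m-1}{2}\rfloor}c_i\,\mathrm{tr}_1^n\big(\beta x^{1+2^{eki}}\big),$$ where $$p(x)=\begin{cases}\sum_{i=1}^{n/2-1}\mathrm{tr}_1^n\big(x^{1+2^i}\big)+\mathrm{tr}_1^{n/2}\big(x^{1+2^{n/2}}\big) & \text{if } n \text{ is even},\\ \sum_{i=1}^{(n-1)/2}\mathrm{tr}_1^n\big(x^{1+2^i}\big) & \text{if } n \text{ is odd}.\end{cases}$$ Then $f_Q$ is bent (if $n$ is even), respectively semi-bent (if $n$ is odd), if and only if $\gcd(c(x^k),x^m-1)=1$ in $\mathbb{F}_2[x]$, where $c(x)=1+\sum_{i=1}^{\lfloor\frac{m-1}{2}\rfloor}c_i(x^i+x^{m-i})$.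
   Context: $\mathbb{F}_{2^e}$ is regarded as a subfield of $\mathbb{F}_{2^n}$ (as $e\mid n$). $\mathrm{tr}_1^n(x)=\sum_{j=0}^{n-1}x^{2^j}$ is the absolute trace from $\mathbb{F}_{2^n}$ to $\mathbb{F}_2$, and for even $n$, $\mathrm{tr}_1^{n/2}(y)=\sum_{j=0}^{n/2-1}y^{2^j}$ for $y\in\mathbb{F}_{2^{n/2}}$ (note $x^{1+2^{n/2}}\in\mathbb{F}_{2^{n/2}}$). For $g:\mathbb{F}_{2^n}\to\mathbb{F}_2$, its Walsh transform is $\hat g(a)=\sum_{x\in\mathbb{F}_{2^n}}(-1)^{g(x)+\mathrm{tr}_1^n(ax)}$; $g$ is bent if $|\hat g(a)|=2^{n/2}$ for all $a\in\mathbb{F}_{2^n}$, and semi-bent if $|\hat g(a)|\in\{0,2^{\lfloor (n+2)/2\rfloor}\}$ for all $a\in\mathbb{F}_{2^n}$. *)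

From HB Require Import structures.
From mathcomp Require Import all_boot all_order all_algebra all_field.
Set Implicit Arguments. Unset Strict Implicit. Unset Printing Implicit Defensive.
Import Order.TTheory GRing.Theory Num.Theory.
Local Open Scope ring_scope.

(* F plays the role of F_{2^n}; Boolean functions F_{2^n} -> F_2 are
   represented as F-valued functions (values 0 / 1 of the prime subfield). *)

Definition trn (F : finFieldType) (n : nat) (x : F) : F :=
  \sum_(j < n) x ^+ (2 ^ j).

Definition trhalf (F : finFieldType) (n : nat) (y : F) : F :=
  \sum_(j < n./2) y ^+ (2 ^ j).

Definition pfun (F : finFieldType) (n : nat) (x : F) : F :=
  if ~~ odd n then
    \sum_(1 <= i < n./2) trn n (x ^+ (1 + 2 ^ i)) + trhalf n (x ^+ (1 + 2 ^ (n./2)))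
  else \sum_(1 <= i < n./2 + 1) trn n (x ^+ (1 + 2 ^ i)).

Definition fQ (F : finFieldType) (n e m k : nat) (alpha beta : F)
    (c : nat -> bool) (x : F) : F :=
  pfun n (alpha * x) +
  \sum_(1 <= i < (m.-1)./2 + 1) (c i)%:R * trn n (beta * x ^+ (1 + 2 ^ (e * k * i))).

Definition walsh (F : finFieldType) (n : nat) (g : F -> F) (a : F) : int :=
  \sum_(x : F) (if g x + trn n (a * x) == 0 then 1 else -1).

Definition bent (F : finFieldType) (n : nat) (g : F -> F) : Prop :=
  forall a : F, `|walsh n g a| = (2 ^ (n./2))%:Z.

Definition semibent (F : finFieldType) (n : nat) (g : F -> F) : Prop :=
  forall a : F, `|walsh n g a| = 0 \/ `|walsh n g a| = (2 ^ ((n + 2) %/ 2))%:Z.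

Definition cpoly (m : nat) (c : nat -> bool) : {poly 'F_2} :=
  1 + \sum_(1 <= i < (m.-1)./2 + 1) (c i)%:R *: ('X^i + 'X^(m - i)).

From HB Require Import structures.
From mathcomp Require Import all_boot all_order all_algebra all_field.
From mathcomp Require Import zify ring.
Set Implicit Arguments. Unset Strict Implicit. Unset Printing Implicit Defensive.
Import Order.TTheory GRing.Theory Num.Theory.
Local Open Scope ring_scope.

(* Let F be a field with 2^n elements and Tr its absolute trace.  If f : F -> F_2 satisfies
      f (x + z) + f x + f z = Tr (x * M z) with M additive, then squaring the
      Walsh transform gives W_f(a)^2 = 2^n * sum_{z in ker M} (-1)^(f z + Tr(a z)),
      which is 0 or 2^n |ker M|, the latter value being attained.  Hence f is
      bent iff |ker M| = 1 (n even) and semi-bent iff |ker M| = 2 (n odd).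
   2. Linearised polynomials.  F_2[X] acts on F by letting X act as
      z |-> z^(2^e); this is a ring action, X^m - 1 acts as 0 when n = e m,
      and a nonzero polynomial of degree < m does not act as 0.
   3. The polar map of f_Q is M z = alpha * L (alpha z), where
      L w = Tr w + c(X^k) . w.  If c(X^k) is coprime to X^m - 1 it acts
      injectively, so ker L is {0} (n even) or {0, 1} (n odd); otherwise
      h = (X^m - 1) / gcd yields an element h . y of ker L outside {0, 1}. *)

Section CharTwo.
Variable F : finFieldType.
Hypothesis char2 : 2 \in [pchar F].

Definition isbit (u : F) := u ^+ 2 = u.

Lemma isbitP u : isbit u -> u = 0 \/ u = 1.
Proof.
move=> hu; have : u * (u - 1) = 0 by rewrite mulrBr mulr1 -expr2 hu subrr.
by move/eqP; rewrite mulf_eq0 subr_eq0 => /orP [] /eqP; [left | right].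
Qed.

Lemma isbit0 : isbit 0. Proof. by rewrite /isbit expr0n. Qed.
Lemma isbit1 : isbit 1. Proof. by rewrite /isbit expr1n. Qed.

Lemma sqrD (x y : F) : (x + y) ^+ 2 = x ^+ 2 + y ^+ 2.
Proof. by rewrite sqrrD mulrn_pchar // addr0. Qed.

Lemma isbitD u v : isbit u -> isbit v -> isbit (u + v).
Proof. by rewrite /isbit sqrD => -> ->. Qed.

Lemma isbitM u v : isbit u -> isbit v -> isbit (u * v).
Proof. by rewrite /isbit exprMn => -> ->. Qed.

Lemma isbit_nat (b : bool) : isbit b%:R.
Proof. by case: b; [exact: isbit1 | exact: isbit0]. Qed.

Lemma isbit_sum (I : Type) (r : seq I) (P : pred I) (G : I -> F) :
  (forall i, P i -> isbit (G i)) -> isbit (\sum_(i <- r | P i) G i).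
Proof.
move=> hG; elim/big_rec: _ => [|i x Pi hx]; first exact: isbit0.
exact: isbitD (hG i Pi) hx.
Qed.

Lemma isbit_frob u j : isbit u -> u ^+ (2 ^ j) = u.
Proof.
move=> hu; elim: j => [|j IH]; first by rewrite expr1.
by rewrite expnS mulnC exprM IH hu.
Qed.

Lemma frobD j (x y : F) : (x + y) ^+ (2 ^ j) = x ^+ (2 ^ j) + y ^+ (2 ^ j).
Proof.
elim: j x y => [|j IH] x y; first by rewrite !expr1.
by rewrite expnS !exprM sqrD IH.
Qed.

Lemma frob0 j : (0 : F) ^+ (2 ^ j) = 0.
Proof. by rewrite expr0n expn_eq0. Qed.

Lemma frobX i j (x : F) : (x ^+ (2 ^ i)) ^+ (2 ^ j) = x ^+ (2 ^ (i + j)).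
Proof. by rewrite -exprM -expnD. Qed.

Lemma frob_sum j (I : Type) (r : seq I) (P : pred I) (G : I -> F) :
  (\sum_(i <- r | P i) G i) ^+ (2 ^ j) = \sum_(i <- r | P i) G i ^+ (2 ^ j).
Proof. by apply: (big_morph (fun x => x ^+ (2 ^ j))); [exact: frobD | exact: frob0]. Qed.

Lemma isbit_orbit_sum h (y : F) :
  y ^+ (2 ^ h) = y -> isbit (\sum_(j < h) y ^+ (2 ^ j)).
Proof.
case: h => [|h] hy; first by rewrite big_ord0; exact: isbit0.
rewrite /isbit (_ : forall t : F, t ^+ 2 = t ^+ (2 ^ 1)) // frob_sum.
under eq_bigr do rewrite frobX addn1.
by rewrite big_ord_recr big_ord_recl /= hy expr1 addrC.
Qed.

End CharTwo.

Section Trace.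
Variable F : finFieldType.
Hypothesis char2 : 2 \in [pchar F].
Variable n : nat.
Hypothesis n_gt0 : (0 < n)%N.
Hypothesis frobn : forall x : F, x ^+ (2 ^ n) = x.
Notation Tr := (@trn F n).

Lemma frob_eqmod a b (x : F) : a = b %[mod n] -> x ^+ (2 ^ a) = x ^+ (2 ^ b).
Proof.
have frob_mul q (y : F) : y ^+ (2 ^ (n * q)) = y.
  elim: q => [|q IH]; first by rewrite muln0 expr1.
  by rewrite mulnS expnD exprM frobn IH.
have frob_mod c (y : F) : y ^+ (2 ^ c) = y ^+ (2 ^ (c %% n)).
  by rewrite {1}(divn_eq c n) expnD exprM mulnC frob_mul.
by move=> hab; rewrite frob_mod hab -frob_mod.
Qed.

Lemma trnD x y : Tr (x + y) = Tr x + Tr y.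
Proof. by rewrite /trn -big_split /=; apply: eq_bigr => j _; rewrite frobD. Qed.

Lemma trn0 : Tr 0 = 0.
Proof. by rewrite /trn big1 // => j _; rewrite frob0. Qed.

Lemma trn_sum (I : Type) (r : seq I) (P : pred I) (G : I -> F) :
  Tr (\sum_(i <- r | P i) G i) = \sum_(i <- r | P i) Tr (G i).
Proof. by apply: (big_morph Tr); [exact: trnD | exact: trn0]. Qed.

Lemma trn_bit x : isbit (Tr x).
Proof. exact: isbit_orbit_sum. Qed.

Lemma trn_frob j x : Tr (x ^+ (2 ^ j)) = Tr x.
Proof.
rewrite -[RHS](isbit_frob j (trn_bit x)) /trn frob_sum //.
by apply: eq_bigr => i _; rewrite !frobX addnC.
Qed.

Lemma trn1 : Tr 1 = (odd n)%:R.
Proof.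
rewrite /trn (eq_bigr (fun _ => 1)) => [|i _]; last by rewrite expr1n.
rewrite sumr_const card_ord -[in LHS](odd_double_half n) mulrnDr -muln2.
by rewrite mulrnA (mulrn_pchar char2) addr0.
Qed.

(* Tr (z x^(2^j)) = Tr (x z^(2^(n-j))), written with exponent (n-1) j *)
Lemma trn_adjoint j (x z : F) :
  Tr (z * x ^+ (2 ^ j)) = Tr (x * z ^+ (2 ^ ((n - 1) * j))).
Proof.
rewrite -(trn_frob ((n - 1) * j)) exprMn frobX (@frob_eqmod _ 0); last first.
  by rewrite (_ : (j + (n - 1) * j = n * j)%N) ?modnMr ?mod0n //; nia.
by rewrite expr1 mulrC.
Qed.

End Trace.

Lemma exists_nonroot (F : finFieldType) (P : {poly F}) :
  P != 0 -> (size P <= #|F|)%N -> exists y, ~~ root P y.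
Proof.
move=> P0 szP; case: (pickP (fun y => ~~ root P y)) => [y hy | hP]; first by exists y.
have := max_poly_roots P0 (rs := enum F); rewrite enum_uniq -cardT.
have -> : all (root P) (enum F) by apply/allP => y _; move/negbFE: (hP y).
by move=> /(_ isT isT); rewrite ltnNge szP.
Qed.

Lemma linpoly_nonzero (F : finFieldType) (s N : nat) (a : nat -> F) :
  (0 < s)%N -> a N != 0 -> (2 ^ (s * N) < #|F|)%N ->
  exists y, \sum_(j < N.+1) a j * y ^+ (2 ^ (s * j)) != 0.
Proof.
move=> s_gt0 aN0 hlt.
pose P := \sum_(j < N.+1) a j *: 'X^(2 ^ (s * j)).
have hP y : P.[y] = \sum_(j < N.+1) a j * y ^+ (2 ^ (s * j)).
  by rewrite /P horner_sum; apply: eq_bigr => j _; rewrite hornerZ hornerXn.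
have szP : (size P <= (2 ^ (s * N)).+1)%N.
  apply: leq_trans (size_sum _ _ _) _; apply/bigmax_leqP => j _.
  apply: leq_trans (size_scale_leq _ _) _.
  by rewrite size_polyXn ltnS leq_exp2l // leq_pmul2l // -ltnS.
have lcP : P`_(2 ^ (s * N)) = a N.
  rewrite /P coef_sum (bigD1 ord_max) //= coefZ coefXn eqxx mulr1 big1 ?addr0 //.
  move=> j; rewrite -val_eqE /= => /negbTE jN.
  by rewrite coefZ coefXn eqn_exp2l // eqn_pmul2l // eq_sym jN mulr0.
have P0 : P != 0 by apply: contra_neq aN0 => P0; rewrite -lcP P0 coef0.
by have [y hy] := exists_nonroot P0 (leq_trans szP hlt); exists y; rewrite -hP.
Qed.

Lemma card_pow2_char2 (F : finFieldType) n : #|F| = (2 ^ n)%N -> 2 \in [pchar F].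
Proof. by move=> hF; exact: (card_finPcharP hF). Qed.

Lemma card_pow2_frob (F : finFieldType) n :
  #|F| = (2 ^ n)%N -> forall x : F, x ^+ (2 ^ n) = x.
Proof. by move=> hF x; rewrite -hF expf_card. Qed.

Section Characters.
Variable F : finFieldType.
Variable n : nat.
Hypothesis hF : #|F| = (2 ^ n)%N.
Hypothesis n_gt0 : (0 < n)%N.
Let char2 := card_pow2_char2 hF.
Let frobn := card_pow2_frob hF.
Notation Tr := (@trn F n).

(* chi u = (-1)^u for a bit u; it turns sums of bits into products *)
Definition chi (u : F) : int := if u == 0 then 1 else -1.

Lemma chiD u v : isbit u -> isbit v -> chi (u + v) = chi u * chi v.
Proof.
move=> /isbitP [] -> /isbitP [] ->; rewrite /chi ?addr0 ?add0r ?eqxx ?oner_eq0 //.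
by rewrite (addrr_pchar2 char2) eqxx.
Qed.

Lemma trn_nondeg (a : F) : a != 0 -> exists y, Tr (a * y) = 1.
Proof.
move=> a0; have [n' en] : exists n', n = n'.+1 by exists n.-1; rewrite prednK.
have hlt : (2 ^ (1 * n') < #|F|)%N by rewrite hF en mul1n ltn_exp2l.
have [|y hy] := @linpoly_nonzero F 1 n' (fun j => a ^+ (2 ^ j)) isT _ hlt.
  by rewrite expf_eq0 (negbTE a0) andbF.
have Try : Tr (a * y) = \sum_(j < n'.+1) a ^+ (2 ^ j) * y ^+ (2 ^ (1 * j)).
  by rewrite /trn en; apply: eq_bigr => j _; rewrite exprMn mul1n.
exists y; case: (isbitP (trn_bit char2 frobn (a * y))) => // h.
by move: hy; rewrite -Try h eqxx.
Qed.

Lemma charsum_vanish (P : {pred F}) (l : F -> F) x0 :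
  (forall x y, x \in P -> y \in P -> x + y \in P) ->
  (forall x y, x \in P -> y \in P -> l (x + y) = l x + l y) ->
  (forall x, x \in P -> isbit (l x)) -> x0 \in P -> l x0 != 0 ->
  \sum_(x in P) chi (l x) = 0.
Proof.
move=> PD lD lbit Px0 lx0.
have l1 : l x0 = 1 by case: (isbitP (lbit _ Px0)) lx0 => ->; rewrite ?eqxx.
have shiftP x : (x + x0 \in P) = (x \in P).
  apply/idP/idP => [h|h]; last exact: PD.
  by have := PD _ _ h Px0; rewrite -addrA (addrr_pchar2 char2) addr0.
set S := \sum_(x in P) _.
have : S = - S.
  rewrite {1}/S (reindex_inj (addIr x0)) /= (eq_bigl _ _ shiftP) -sumrN.
  apply: eq_bigr => x Px; rewrite lD // l1 chiD; [|exact: lbit | exact: isbit1].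
  by rewrite /chi oner_eq0 mulrN1.
by move/eqP; rewrite -addr_eq0 -mulr2n mulrn_eq0 /= => /eqP.
Qed.

Lemma charsum_trn (x : F) :
  \sum_(a : F) chi (Tr (a * x)) = if x == 0 then (2 ^ n)%:Z else 0.
Proof.
case: eqP => [-> | /eqP x0].
  rewrite (eq_bigr (fun _ => 1)) => [|a _]; last by rewrite mulr0 trn0 /chi eqxx.
  by rewrite sumr_const -hF natz.
have [y hy] := trn_nondeg x0.
rewrite (eq_bigl (mem predT)) //.
apply: (@charsum_vanish predT (fun a => Tr (a * x)) y) => //.
- by move=> a b _ _; rewrite mulrDl trnD.
- by move=> a _; exact: (trn_bit char2 frobn).
- by rewrite mulrC hy oner_eq0.
Qed.

End Characters.

Definition kerf (F : finFieldType) (M : F -> F) : pred F := [pred z | M z == 0].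

Section QuadraticSpectrum.
Variable F : finFieldType.
Variable n : nat.
Hypothesis hF : #|F| = (2 ^ n)%N.
Hypothesis n_gt0 : (0 < n)%N.
Let char2 := card_pow2_char2 hF.
Let frobn := card_pow2_frob hF.
Notation Tr := (@trn F n).
Let Tr_bit y : isbit (Tr y) := trn_bit char2 frobn y.
Variables f M : F -> F.
Hypothesis f_bit : forall x, isbit (f x).
Hypothesis f_polar : forall x z, f (x + z) + f x + f z = Tr (x * M z).
Hypothesis M_additive : forall x y, M (x + y) = M x + M y.

Lemma polar_expand x z : f (x + z) = Tr (x * M z) + f x + f z.
Proof.
have kill2 (u v : F) : u + v *+ 2 = u by rewrite (mulrn_pchar char2) addr0.
by rewrite -(kill2 (f (x + z)) (f x + f z)) -f_polar; ring.
Qed.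

Lemma M0 : M 0 = 0.
Proof. by apply: (addrI (M 0)); rewrite -M_additive !addr0. Qed.

Lemma f0 : f 0 = 0.
Proof. by have := polar_expand 0 0; rewrite addr0 mul0r trn0 add0r (addrr_pchar2 char2). Qed.

Lemma walsh_sqr a : walsh n f a ^+ 2 =
  (2 ^ n)%:Z * \sum_(z in kerf M) chi (f z + Tr (a * z)).
Proof.
have ubit y : isbit (f y + Tr (a * y)) by apply: isbitD.
have -> : walsh n f a = \sum_(x : F) chi (f x + Tr (a * x)) by [].
have shift x z : chi (f x + Tr (a * x)) * chi (f (x + z) + Tr (a * (x + z))) =
    chi (Tr (x * M z)) * chi (f z + Tr (a * z)).
  rewrite -!(chiD hF) //; congr chi; rewrite polar_expand mulrDr trnD //.
  rewrite (_ : f x + Tr (a * x) + (Tr (x * M z) + f x + f z + (Tr (a * x) + Tr (a * z)))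
     = Tr (x * M z) + (f z + Tr (a * z)) + (f x + Tr (a * x)) *+ 2); last by ring.
  by rewrite (mulrn_pchar char2) addr0.
rewrite expr2 big_distrl /=.
under eq_bigr => x _ do rewrite big_distrr /= (reindex_inj (addrI x)) /=.
under eq_bigr => x _ do under eq_bigr => z _ do rewrite shift.
rewrite exchange_big /=.
under eq_bigr => z _ do rewrite -big_distrl /= (charsum_trn hF n_gt0).
rewrite mulr_sumr [RHS]big_mkcond /=; apply: eq_bigr => z _.
by rewrite inE; case: ifP => _; rewrite ?mul0r ?mulr0 // mulrC.
Qed.

(* On the subgroup ker M the exponent z |-> f z + Tr (a z) is additive, so
   W_f(a)^2 is either 0 or 2^n |ker M|. *)
Lemma walsh_sqr_values a : walsh n f a ^+ 2 = 0 \/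
  walsh n f a ^+ 2 = (2 ^ n)%:Z * #|kerf M|%:Z.
Proof.
rewrite walsh_sqr.
have kerD x y : x \in kerf M -> y \in kerf M -> (x + y) \in kerf M.
  by rewrite !inE => /eqP hx /eqP hy; rewrite M_additive hx hy addr0.
have lD x y : x \in kerf M -> y \in kerf M ->
   f (x + y) + Tr (a * (x + y)) = f x + Tr (a * x) + (f y + Tr (a * y)).
  move=> _; rewrite inE => /eqP hy; rewrite polar_expand hy mulr0 trn0 add0r.
  by rewrite mulrDr trnD // addrACA.
case: (pickP (fun z => (z \in kerf M) && (f z + Tr (a * z) != 0))) => [z /andP [kz lz] | triv].
  left; rewrite (charsum_vanish hF kerD lD _ kz lz) ?mulr0 // => x _; exact: isbitD.
right; congr (_ * _); rewrite (eq_bigr (fun _ => 1)) ?sumr_const ?natz // => z kz.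
by move: (triv z); rewrite kz /= => /negbFE /eqP ->; rewrite /chi eqxx.
Qed.

(* Parseval-type identity sum_a W_f(a) = 2^n shows that W_f is not
   identically 0, hence W_f(a)^2 = 2^n |ker M| for some a. *)
Lemma walsh_sqr_attained : exists a, walsh n f a ^+ 2 = (2 ^ n)%:Z * #|kerf M|%:Z.
Proof.
have sum_walsh : \sum_(a : F) walsh n f a = (2 ^ n)%:Z.
  have -> : \sum_(a : F) walsh n f a = \sum_(a : F) \sum_(x : F) chi (f x + Tr (a * x)) by [].
  rewrite exchange_big /=.
  under eq_bigr => x _ do under eq_bigr => y _ do rewrite (chiD hF) //.
  under eq_bigr => x _ do rewrite -big_distrr /= (charsum_trn hF n_gt0).
  rewrite (bigD1 0) //= eqxx f0 /chi eqxx mul1r big1 ?addr0 // => x /negbTE ->.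
  exact: mulr0.
case: (pickP (fun a => walsh n f a != 0)) => [a wa | w0].
  exists a; case: (walsh_sqr_values a) => // /eqP; rewrite expf_eq0 /= => /eqP w0.
  by move: wa; rewrite w0 eqxx.
move: sum_walsh; rewrite big1 => [h|a _]; last by move: (w0 a) => /= /negbFE /eqP.
by move: (expn_gt0 2 n); case: h => <-.
Qed.

Lemma walsh_sqr_injective : (forall z, M z = 0 -> z = 0) ->
  forall a, walsh n f a ^+ 2 = (2 ^ n)%:Z.
Proof.
move=> Minj a; rewrite walsh_sqr (big_pred1 0) => [|z]; last first.
  by rewrite inE; apply/eqP/eqP => [/Minj | ->]; last exact: M0.
by rewrite f0 mulr0 trn0 add0r /chi eqxx mulr1.
Qed.

Lemma kerf0 : 0 \in kerf M.
Proof. by rewrite inE M0. Qed.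

Let pow2n_neq0 : (2 ^ n)%:Z != 0.
Proof. by rewrite -natz pnatr_eq0 expn_eq0. Qed.

Lemma normz_pow2 (W : int) k : `|W| = (2 ^ k)%:Z <-> W ^+ 2 = (2 ^ (k + k))%:Z.
Proof.
have pow_sq : ((2 ^ k)%:Z ^+ 2 = (2 ^ (k + k))%:Z)%R.
  by rewrite -!natz -natrX -expnM muln2 -addnn.
split=> [h | h]; first by rewrite -real_normK ?num_real // h.
by apply/eqP; rewrite -(@eqrXn2 _ 2) ?normr_ge0 // real_normK ?num_real // h pow_sq.
Qed.

Lemma bent_iff_ker : ~~ odd n -> bent n f <-> #|kerf M| = 1%N.
Proof.
move=> n_even.
have half : (n./2 + n./2)%N = n by rewrite addnn -[RHS](odd_double_half n) (negbTE n_even).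
split=> [hbent | ker1 a]; last first.
  apply/normz_pow2; rewrite half; apply: walsh_sqr_injective => z Mz.
  apply/eqP; apply: contraT => z0.
  have : (1 < #|kerf M|)%N.
    by apply/card_gt1P; exists 0, z; rewrite kerf0 inE Mz eq_sym.
  by rewrite ker1.
have [a ha] := walsh_sqr_attained.
have := (normz_pow2 _ _).1 (hbent a).
by rewrite half ha -[X in _ = X]mulr1 => /(mulfI pow2n_neq0) [].
Qed.

Lemma semibent_iff_ker : odd n -> semibent n f <-> #|kerf M| = 2%N.
Proof.
move=> n_odd.
have half : ((n + 2) %/ 2 + (n + 2) %/ 2)%N = n.+1.
  have := odd_double_half n; rewrite n_odd /=; lia.
have pow_succ : (2 ^ n.+1)%:Z = (2 ^ n)%:Z * 2%N%:Z by rewrite expnS -!natz -natrM mulnC.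
split=> [hsemi | ker2 a]; last first.
  case: (walsh_sqr_values a) => h.
    by left; apply/eqP; move/eqP: h; rewrite normr_eq0 expf_eq0.
  by right; apply/normz_pow2; rewrite half h ker2 pow_succ.
have [a ha] := walsh_sqr_attained.
case: (hsemi a) => h.
  move: ha; rewrite -real_normK ?num_real // h expr0n /= => /esym /eqP.
  rewrite mulf_eq0 (negbTE pow2n_neq0) -natz pnatr_eq0 => /eqP ker0.
  have : (0 < #|kerf M|)%N by apply/card_gt0P; exists 0; exact: kerf0.
  by rewrite ker0.
have := (normz_pow2 _ _).1 h.
by rewrite half ha pow_succ => /(mulfI pow2n_neq0) [].
Qed.

Lemma spectrum_iff_ker :
  (if odd n then semibent n f else bent n f) <-> #|kerf M| = (odd n).+1.
Proof.
by case: ifP => n_odd; [exact: semibent_iff_ker | apply: bent_iff_ker; rewrite n_odd].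
Qed.

End QuadraticSpectrum.

Section LinearisedAction.
Variable F : finFieldType.
Hypothesis char2 : 2 \in [pchar F].
Variable e : nat.

Definition toF (b : 'F_2) : F := (val b)%:R.

Lemma F2_cases (b : 'F_2) : b = 0 \/ b = 1.
Proof. by move: b => [[|[|//]] H]; [left | right]; apply/val_inj. Qed.

Lemma toF0 : toF 0 = 0. Proof. by []. Qed.
Lemma toF1 : toF 1 = 1. Proof. by rewrite /toF /= mulr1n. Qed.

Lemma toFD a b : toF (a + b) = toF a + toF b.
Proof.
case: (F2_cases a) => ->; case: (F2_cases b) => ->; rewrite ?add0r ?addr0 //.
by rewrite (addrr_pchar2 char2) -toF0; congr toF; apply/val_inj.
Qed.

Lemma toFM a b : toF (a * b) = toF a * toF b.
Proof.
by case: (F2_cases a) => ->; rewrite ?mul0r ?mul1r ?toF0 ?toF1 ?mul0r ?mul1r.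
Qed.

Lemma toF_bit b : isbit (toF b).
Proof. by case: (F2_cases b) => ->; rewrite ?toF0 ?toF1; [exact: isbit0 | exact: isbit1]. Qed.

Lemma toF_eq0 b : (toF b == 0) = (b == 0).
Proof. by case: (F2_cases b) => ->; rewrite ?toF0 ?toF1 ?eqxx ?oner_eq0. Qed.

Lemma toF_nat (b : bool) : toF b%:R = b%:R.
Proof. by case: b; rewrite ?toF1 ?toF0. Qed.

Definition linact (p : {poly 'F_2}) (z : F) : F :=
  \sum_(j < size p) toF p`_j * z ^+ (2 ^ (e * j)).

Lemma linact_widen N (p : {poly 'F_2}) (z : F) : (size p <= N)%N ->
  linact p z = \sum_(j < N) toF p`_j * z ^+ (2 ^ (e * j)).
Proof.
move=> szp; rewrite /linact (big_ord_widen N (fun j => toF p`_j * z ^+ (2 ^ (e * j)))) //.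
rewrite big_mkcond /=; apply: eq_bigr => j _; case: ifP => // /negbT.
by rewrite -leqNgt => jp; rewrite nth_default // toF0 mul0r.
Qed.

Lemma linact0 z : linact 0 z = 0.
Proof. by rewrite /linact size_poly0 big_ord0. Qed.

Lemma linactD p q z : linact (p + q) z = linact p z + linact q z.
Proof.
set N := maxn (size p) (size q).
rewrite (@linact_widen N (p + q)) ?(leq_trans (size_polyD _ _)) //.
rewrite (@linact_widen N p) ?leq_maxl // (@linact_widen N q) ?leq_maxr //.
by rewrite -big_split; apply: eq_bigr => j _; rewrite coefD toFD mulrDl.
Qed.

Lemma linactN p z : linact (- p) z = linact p z.
Proof.
apply/eqP; rewrite -[linact p z](oppr_pchar2 char2) -addr_eq0 -linactD addNr.
by rewrite linact0.
Qed.

Lemma linactC c z : linact c%:P z = toF c * z.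
Proof.
by rewrite (@linact_widen 1) ?size_polyC ?leq_b1 // big_ord1 coefC /= muln0 expr1.
Qed.

Lemma linact1 z : linact 1 z = z.
Proof. by rewrite -polyC1 linactC toF1 mul1r. Qed.

Lemma linactZ c p z : linact (c *: p) z = toF c * linact p z.
Proof.
rewrite (@linact_widen (size p)) ?size_scale_leq // /linact mulr_sumr.
by apply: eq_bigr => j _; rewrite coefZ toFM mulrA.
Qed.

Lemma linactMX p z : linact (p * 'X) z = linact p z ^+ (2 ^ e).
Proof.
rewrite (@linact_widen (size p).+1); last first.
  by apply: leq_trans (size_polyMleq _ _) _; rewrite size_polyX addn2.
rewrite big_ord_recl coefMX eqxx toF0 mul0r add0r /linact frob_sum //.
apply: eq_bigr => j _; rewrite coefMX /= exprMn (isbit_frob _ (toF_bit _)) frobX.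
by congr (toF p`_ _ * z ^+ (2 ^ _)); rewrite /bump /=; lia.
Qed.

Lemma linactM p q z : linact (p * q) z = linact p (linact q z).
Proof.
elim/poly_ind: p => [|p c IH]; first by rewrite mul0r !linact0.
rewrite mulrDl mulrAC linactD linactMX IH mul_polyC linactZ.
by rewrite [RHS]linactD linactMX linactC.
Qed.

Lemma linact_additive p z w : linact p (z + w) = linact p z + linact p w.
Proof. by rewrite /linact -big_split; apply: eq_bigr => j _; rewrite frobD // mulrDr. Qed.

Lemma linact_at0 p : linact p 0 = 0.
Proof. by rewrite /linact big1 // => j _; rewrite frob0 mulr0. Qed.

Lemma linactXn j z : linact 'X^j z = z ^+ (2 ^ (e * j)).
Proof.
elim: j => [|j IH]; first by rewrite expr0 linact1 muln0 expr1.
by rewrite exprSr linactMX IH frobX mulnS addnC.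
Qed.

Lemma linact_at1 p : linact p 1 = toF p.[1].
Proof.
elim/poly_ind: p => [|p c IH]; first by rewrite linact0 horner0.
rewrite linactD linactMX linactC IH (isbit_frob _ (toF_bit _)) hornerMXaddC.
by rewrite !mulr1 toFD addrC.
Qed.

End LinearisedAction.

Section QuadraticP.
Variable F : finFieldType.
Hypothesis char2 : 2 \in [pchar F].
Variable n : nat.
Hypothesis n_gt0 : (0 < n)%N.
Hypothesis frobn : forall x : F, x ^+ (2 ^ n) = x.
Notation Tr := (@trn F n).

Let add_pairs (A B C D : F) : A + B + (C + D) + A + D = B + C.
Proof.
have kill2 (u v : F) : u + v *+ 2 = u by rewrite (mulrn_pchar char2) addr0.
by rewrite -(kill2 (B + C) (A + D)); ring.
Qed.

(* rho j is the polar map of the monomial form x |-> Tr (x^(1 + 2^j)) *)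
Definition rho (j : nat) (v : F) := v ^+ (2 ^ j) + v ^+ (2 ^ ((n - 1) * j)).

Lemma monomial_polar j (x z : F) :
  Tr ((x + z) ^+ (1 + 2 ^ j)) + Tr (x ^+ (1 + 2 ^ j)) + Tr (z ^+ (1 + 2 ^ j))
  = Tr (x * rho j z).
Proof.
rewrite add1n !exprS frobD // mulrDl !mulrDr !(trnD char2) /rho.
by rewrite (trn_adjoint char2 n_gt0 frobn j x z) add_pairs.
Qed.

Lemma trhalfD (x y : F) : trhalf n (x + y) = trhalf n x + trhalf n y.
Proof. by rewrite /trhalf -big_split /=; apply: eq_bigr => j _; rewrite frobD. Qed.

Lemma trhalf_pair (w : F) : (n./2 + n./2 = n)%N ->
  trhalf n w + trhalf n (w ^+ (2 ^ n./2)) = Tr w.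
Proof.
move=> half; rewrite /trhalf /trn -[in RHS]half big_split_ord /=; congr (_ + _).
by apply: eq_bigr => j _; rewrite frobX.
Qed.

Lemma trhalf_polar (x z : F) : ~~ odd n ->
  trhalf n ((x + z) ^+ (1 + 2 ^ n./2)) + trhalf n (x ^+ (1 + 2 ^ n./2))
  + trhalf n (z ^+ (1 + 2 ^ n./2)) = Tr (x * z ^+ (2 ^ n./2)).
Proof.
move=> n_even.
have half : (n./2 + n./2 = n)%N.
  by rewrite addnn -[RHS](odd_double_half n) (negbTE n_even).
have conj : z * x ^+ (2 ^ n./2) = (x * z ^+ (2 ^ n./2)) ^+ (2 ^ n./2).
  by rewrite exprMn frobX half frobn mulrC.
rewrite add1n !exprS frobD // mulrDl !mulrDr !trhalfD conj -(trhalf_pair _ half).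
exact: add_pairs.
Qed.

Lemma trn_split (v : F) : Tr v = v + \sum_(1 <= j < n) v ^+ (2 ^ j).
Proof. by rewrite /trn -(big_mkord xpredT (fun j => v ^+ (2 ^ j))) big_ltn // expr1. Qed.

Lemma rho_exp H (v : F) : (0 < H)%N -> (H <= n)%N ->
  v ^+ (2 ^ ((n - 1) * H)) = v ^+ (2 ^ (n - H)).
Proof.
move=> H_gt0 Hn; apply: (frob_eqmod frobn).
by rewrite (_ : ((n - 1) * H = (H - 1) * n + (n - H))%N) ?modnMDl //; nia.
Qed.

Lemma rho_sum H (v : F) : (0 < H)%N -> (H <= n)%N ->
  \sum_(1 <= i < H) rho i v =
  \sum_(1 <= j < H) v ^+ (2 ^ j) + \sum_((n - H).+1 <= j < n) v ^+ (2 ^ j).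
Proof.
elim: H => [//|H IH] _ Hn.
case: (posnP H) => [->|H_gt0]; first by rewrite !big_geq ?addr0 //; lia.
rewrite big_nat_recr //= IH //; last by lia.
rewrite big_nat_recr //= (@big_ltn _ _ _ (n - H.+1).+1) ?ltnS; last by lia.
have -> : (n - H.+1).+2 = (n - H).+1 by lia.
have -> : (n - H.+1).+1 = (n - H)%N by lia.
by rewrite /rho rho_exp //; [ring | lia].
Qed.

(* p (u + v) + p u + p v = Tr (u (Tr v + v)): the monomial polar maps
   together produce every conjugate v^(2^j), 0 < j < n, exactly once *)
Lemma pfun_polar (u v : F) :
  pfun n (u + v) + pfun n u + pfun n v = Tr (u * (Tr v + v)).
Proof.
rewrite /pfun; case: ifP => n_even; set h := n./2.
- have half : (h + h = n)%N by rewrite /h addnn -[RHS](odd_double_half n) (negbTE n_even).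
  rewrite (_ : forall a b c d e f : F, a + b + (c + d) + (e + f) = (a + c + e) + (b + d + f));
    last by move=> *; ring.
  rewrite trhalf_polar //= -!big_split /=.
  under eq_bigr do rewrite monomial_polar.
  rewrite -(trn_sum char2) -(trnD char2) -mulr_sumr -mulrDr; congr (Tr (_ * _)).
  rewrite rho_sum; [|lia|lia].
  rewrite trn_split (_ : (n - h).+1 = h.+1); last by lia.
  rewrite addrAC -(big_nat_recr h _ (fun j => v ^+ (2 ^ j))) /=; last by lia.
  rewrite -big_cat_nat /=; [|lia|lia].
  by rewrite addrAC (addrr_pchar2 char2) add0r.
- have half : (h + h).+1 = n by rewrite /h addnn -[RHS](odd_double_half n) (negbFE n_even).
  rewrite -!big_split /=.
  under eq_bigr do rewrite monomial_polar.
  rewrite -(trn_sum char2) -mulr_sumr; congr (Tr (_ * _)).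
  rewrite rho_sum; [|lia|lia].
  rewrite trn_split (_ : (n - (h + 1)).+1 = h + 1)%N; last by lia.
  rewrite -big_cat_nat /=; [|lia|lia].
  by rewrite addrAC (addrr_pchar2 char2) add0r.
Qed.

(* p is F_2-valued; for even n the half trace is a sum over a full orbit *)
Lemma pfun_bit (u : F) : isbit (pfun n u).
Proof.
have Tr_bit y : isbit (Tr y) := trn_bit char2 frobn y.
rewrite /pfun; case: ifP => n_even; last exact: isbit_sum.
apply: (isbitD char2); first exact: isbit_sum.
have half : (n./2 + n./2 = n)%N by rewrite addnn -[RHS](odd_double_half n) (negbTE n_even).
by apply: (isbit_orbit_sum char2); rewrite add1n exprS exprMn frobX half frobn mulrC.
Qed.

End QuadraticP.

Section PolarQ.
Variable F : finFieldType.
Hypothesis char2 : 2 \in [pchar F].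
Variables n e m k : nat.
Hypothesis n_gt0 : (0 < n)%N.
Hypothesis frobn : forall x : F, x ^+ (2 ^ n) = x.
Hypothesis n_em : n = (e * m)%N.
Variables alpha beta : F.
Hypothesis alpha_sub : alpha ^+ (2 ^ e) = alpha.
Hypothesis beta_sq : beta = alpha ^+ 2.
Variable c : nat -> bool.
Notation Tr := (@trn F n).

Definition cXk : {poly 'F_2} := cpoly m c \Po 'X^k.

Definition Lmap (w : F) : F := Tr w + linact e cXk w.

Definition polarQ (z : F) : F := alpha * Lmap (alpha * z).

(* the quadratic form of which f_Q is the composite with x |-> alpha x *)
Definition gQ (u : F) : F := pfun n u +
  \sum_(1 <= i < (m.-1)./2 + 1) (c i)%:R * Tr (u ^+ (1 + 2 ^ (e * k * i))).

Lemma alpha_frob q : alpha ^+ (2 ^ (e * q)) = alpha.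
Proof.
elim: q => [|q IH]; first by rewrite muln0 expr1.
by rewrite mulnS -frobX alpha_sub IH.
Qed.

(* f_Q x = gQ (alpha x), since beta x^(1+2^(e q)) = (alpha x)^(1+2^(e q)) *)
Lemma fQ_gQ x : fQ n e m k alpha beta c x = gQ (alpha * x).
Proof.
rewrite /fQ /gQ; congr (_ + _); apply: eq_bigr => i _.
rewrite -mulnA exprMn beta_sq; congr (_ * Tr (_ * _)).
by rewrite add1n [RHS]exprS alpha_frob expr2.
Qed.

(* c(X^k) . w = w + sum_i c_i rho (e k i) w, using that X^m acts trivially *)
Lemma linact_cXk (w : F) :
  linact e cXk w = w + \sum_(1 <= i < (m.-1)./2 + 1) (c i)%:R * rho n (e * k * i) w.
Proof.
rewrite /cXk /cpoly comp_polyD (comp_polyC 1).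
rewrite (big_morph (fun p => p \Po 'X^k) (fun p q => comp_polyD p q _) (comp_polyC 0 _)).
rewrite (linactD char2) linact1; congr (_ + _).
rewrite (big_morph (fun p => linact e p w) (fun p q => linactD char2 e p q w) (linact0 e w)).
apply: eq_big_nat => i /andP [i_ge1 i_lt].
rewrite comp_polyZ comp_polyD !comp_Xn_poly linactZ (linactD char2) -!exprM !(linactXn char2).
rewrite toF_nat /rho mulnA; congr (_ * (_ + _)).
apply: (frob_eqmod frobn); apply/eqP; rewrite -(eqn_modDr (e * k * i)).
rewrite (_ : ((n - 1) * (e * k * i) + e * k * i = (e * k * i) * n)%N); last by nia.
rewrite (_ : (e * (k * (m - i)) + e * k * i = k * n)%N); last by rewrite n_em; nia.
by rewrite !modnMl.
Qed.

Lemma fQ_polar x z : fQ n e m k alpha beta c (x + z) + fQ n e m k alpha beta c x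
   + fQ n e m k alpha beta c z = Tr (x * polarQ z).
Proof.
rewrite !fQ_gQ mulrDr /gQ.
rewrite (_ : forall a b a' b' a'' b'' : F,
  a + b + (a' + b') + (a'' + b'') = (a + a' + a'') + (b + b' + b'')); last by move=> *; ring.
rewrite (pfun_polar char2 n_gt0 frobn) -!big_split /=.
under eq_bigr => i _ do rewrite -!mulrDr (mulrDr alpha) (monomial_polar char2 n_gt0 frobn).
rewrite /polarQ /Lmap linact_cXk [x * (alpha * _)]mulrA (mulrC x alpha).
rewrite addrA [in RHS]mulrDr [in RHS](trnD char2) [in RHS]mulr_sumr (trn_sum char2).
congr (_ + _); apply: eq_bigr => i _; rewrite mulrCA.
by case: (c i); rewrite ?mul1r ?mul0r ?trn0.
Qed.

Lemma polarQ_additive z1 z2 : polarQ (z1 + z2) = polarQ z1 + polarQ z2.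
Proof.
rewrite /polarQ /Lmap -mulrDr; congr (_ * _).
by rewrite mulrDr (trnD char2) (linact_additive char2) addrACA.
Qed.

Lemma fQ_bit x : isbit (fQ n e m k alpha beta c x).
Proof.
rewrite fQ_gQ /gQ; apply: (isbitD char2); first exact: (pfun_bit char2 frobn).
apply: (isbit_sum char2) => i _; apply: isbitM; first exact: isbit_nat.
exact: (trn_bit char2 frobn).
Qed.

End PolarQ.

Section KernelL.
Variable F : finFieldType.
Variables n e m k : nat.
Hypothesis hF : #|F| = (2 ^ n)%N.
Hypothesis n_em : n = (e * m)%N.
Hypothesis e_gt0 : (0 < e)%N.
Hypothesis m_gt0 : (0 < m)%N.
Variable c : nat -> bool.
Let char2 := card_pow2_char2 hF.
Let frobn := card_pow2_frob hF.
Notation Tr := (@trn F n).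
Notation L := (@Lmap F n e m k c).
Notation Xm1 := ('X^m - 1 : {poly 'F_2}).

(* Tr (p . z) = p(1) Tr z, as Tr is Frobenius-invariant *)
Lemma trn_linact p z : Tr (linact e p z) = toF F p.[1] * Tr z.
Proof.
elim/poly_ind: p => [|p c0 IH]; first by rewrite linact0 horner0 toF0 mul0r trn0.
rewrite (linactD char2) linactMX // linactC (trnD char2) (trn_frob char2 frobn) IH.
rewrite hornerMXaddC mulr1 (toFD char2) mulrDl; congr (_ + _).
by case: (F2_cases c0) => ->; rewrite ?toF0 ?toF1 ?mul0r ?mul1r ?trn0.
Qed.

(* X^m acts as the identity since z^(2^(e m)) = z *)
Lemma linact_Xm1 (z : F) : linact e Xm1 z = 0.
Proof.
by rewrite (linactD char2) linactN // (linactXn char2) linact1 -n_em frobn (addrr_pchar2 char2).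
Qed.

Lemma cXk_at1 : (cXk m k c).[1] = 1.
Proof.
rewrite /cXk horner_comp hornerXn expr1n /cpoly hornerD hornerC horner_sum big1 ?addr0 //.
move=> i _; rewrite hornerZ hornerD !hornerXn !expr1n.
by rewrite (_ : (1 + 1 : 'F_2) = 0) ?mulr0 //; apply/val_inj.
Qed.

Lemma linact_cXk_1 : linact e (cXk m k c) (1 : F) = 1.
Proof. by rewrite (linact_at1 char2) cXk_at1 toF1. Qed.

Lemma L0 : L 0 = 0.
Proof. by rewrite /Lmap trn0 linact_at0 addr0. Qed.

Lemma L1 : (L 1 == 0) = odd n.
Proof.
rewrite /Lmap linact_cXk_1 (trn1 char2).
by case: (odd n); rewrite ?(addrr_pchar2 char2) ?eqxx // add0r oner_eq0.
Qed.

Lemma linact_nonzero (h : {poly 'F_2}) : h != 0 -> (size h <= m)%N ->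
  exists y : F, linact e h y != 0.
Proof.
move=> h0 szh; have szh_gt0 : (0 < size h)%N by rewrite size_poly_gt0.
have hlt : (2 ^ (e * (size h).-1) < #|F|)%N.
  by rewrite hF n_em ltn_exp2l // ltn_pmul2l //; lia.
have [|y hy] := @linpoly_nonzero F e (size h).-1 (fun j => toF F h`_j) e_gt0 _ hlt.
  by rewrite -/(lead_coef h) toF_eq0 lead_coef_eq0.
by exists y; rewrite (@linact_widen F e (size h).-1.+1) // prednK.
Qed.

Lemma kerL_coprime : coprimep (cXk m k c) Xm1 ->
  forall w, (L w == 0) = (w == 0) || ((w == 1) && odd n).
Proof.
move=> /Bezout_eq1_coprimepP [[u v] /= bezout].
have inj (w : F) : linact e (cXk m k c) w = 0 -> w = 0.
  move=> hw; rewrite -(linact1 e w) -bezout (linactD char2) !(linactM char2) hw.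
  by rewrite linact_Xm1 !linact_at0 addr0.
move=> w; apply/idP/idP => [/eqP Lw | ]; last first.
  by case/orP => [/eqP -> | /andP [/eqP -> n_odd]]; [rewrite L0 | rewrite L1].
have cw : linact e (cXk m k c) w = Tr w.
  by move/eqP: Lw; rewrite /Lmap addr_eq0 (oppr_pchar2 char2) eq_sym => /eqP.
case: (isbitP (trn_bit char2 frobn w)) => trw; rewrite trw in cw.
  by rewrite (inj _ cw) eqxx.
have w1 : w = 1.
  apply/eqP; rewrite -subr_eq0 (oppr_pchar2 char2); apply/eqP/inj.
  by rewrite (linact_additive char2) cw linact_cXk_1 (addrr_pchar2 char2).
by rewrite w1 eqxx -L1 -w1 Lw eqxx orbT.
Qed.

(* Otherwise, with g = gcd (c(X^k), X^m - 1) and h = (X^m - 1) / g, some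
   h . y is a nonzero kernel element of trace 0, hence different from 0, 1. *)
Lemma kerL_noncoprime : ~~ coprimep (cXk m k c) Xm1 ->
  exists w, [/\ L w = 0, w != 0 & w != 1].
Proof.
move=> ncop; set P := cXk m k c; set g := gcdp P Xm1.
have Xm1_0 : Xm1 != 0 by rewrite -size_poly_eq0 size_XnsubC.
have g0 : g != 0 by rewrite gcdp_eq0 negb_and Xm1_0 orbT.
have szg : (1 < size g)%N.
  by move: ncop; rewrite /coprimep -/g; have := size_poly_gt0 g; rewrite g0; lia.
set h := Xm1 %/ g; set q := P %/ g.
have hg : h * g = Xm1 by rewrite divpK // dvdp_gcdr.
have qg : q * g = P by rewrite divpK // dvdp_gcdl.
have h0 : h != 0 by apply: contra_neq Xm1_0 => h0; rewrite -hg h0 mul0r.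
have szh : (size h <= m)%N.
  have := size_mul h0 g0; rewrite hg size_XnsubC //.
  by move: szg; set sg := size g; set sh := size h; lia.
have [y hy] := linact_nonzero h0 szh.
set w := linact e h y.
have Pw : linact e P w = 0.
  by rewrite -qg (linactM char2) /w -(linactM char2 e g h) (mulrC g h) hg linact_Xm1 linact_at0.
have h1 : h.[1] = 0.
  have : (h * g).[1] = 0 by rewrite hg hornerD hornerN hornerXn expr1n hornerC subrr.
  rewrite hornerM => /eqP; rewrite mulf_eq0 => /orP [/eqP // | /eqP g1].
  by move: cXk_at1; rewrite -/P -qg hornerM g1 mulr0 => /eqP; rewrite eq_sym oner_eq0.
exists w; split => //.
- by rewrite /Lmap -/P Pw /w trn_linact h1 toF0 mul0r addr0.
- by apply: contra_eq_neq Pw => ->; rewrite linact_cXk_1 oner_eq0.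
Qed.

Lemma card_kerL_iff : #|kerf L| = (odd n).+1 <-> coprimep (cXk m k c) Xm1.
Proof.
have zero_ker : 0 \in kerf L by rewrite inE L0.
case: (boolP (coprimep _ _)) => cop; split=> // hyp.
  have ker_eq : kerf L =i [pred w | (w == 0) || ((w == 1) && odd n)].
    by move=> w; rewrite !inE kerL_coprime.
  rewrite (eq_card ker_eq); case: (odd n).
    rewrite (eq_card (B := pred2 0 1)) ?card2 ?(eq_sym 0) ?oner_eq0 // => w.
    by rewrite !inE andbT.
  by rewrite (eq_card (B := pred1 0)) ?card1 // => w; rewrite !inE andbF orbF.
have [w [Lw w0 w1]] := kerL_noncoprime cop.
have w_ker : w \in kerf L by rewrite inE Lw.
move: hyp; case n_odd: (odd n) => hcard.
  have : (2 < #|kerf L|)%N.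
    have one_ker : 1 \in kerf L by rewrite inE L1 n_odd.
    apply/card_gt2P; exists 0, 1, w; rewrite zero_ker one_ker w_ker.
    by split; [| split; rewrite // eq_sym ?oner_eq0].
  by rewrite hcard.
have : (1 < #|kerf L|)%N by apply/card_gt1P; exists 0, w; rewrite eq_sym w0.
by rewrite hcard.
Qed.

End KernelL.

Lemma card_ker_scaled (F : finFieldType) (a : F) (G : F -> F) : a != 0 ->
  #|kerf (fun z => a * G (a * z))| = #|kerf G|.
Proof.
move=> a0; rewrite -!sum1_card [RHS](reindex_inj (mulfI a0)) /=.
by apply: eq_bigl => z; rewrite !inE mulf_eq0 (negbTE a0).
Qed.

Unset Implicit Arguments.

Theorem theorem4 (F : finFieldType) (n e m k : nat)
  (hF : #|F| = (2 ^ n)%N) (hn : n = (e * m)%N) (he : (1 <= e)%N) (hm : (1 <= m)%N)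
  (hk : (1 <= k)%N) (alpha beta : F)
  (halpha_sub : alpha ^+ (2 ^ e) = alpha) (halpha0 : alpha != 0)
  (hbeta : beta = alpha ^+ 2) (c : nat -> bool) :
  (if odd n then semibent n (fQ n e m k alpha beta c)
   else bent n (fQ n e m k alpha beta c)) <->
  coprimep (cpoly m c \Po 'X^k) ('X^m - 1).
Proof.
have char2 := card_pow2_char2 hF.
have frobn := card_pow2_frob hF.
have n_gt0 : (0 < n)%N by rewrite hn muln_gt0 he hm.
have f_bit := fQ_bit char2 m k frobn halpha_sub hbeta c.
have f_polar := fQ_polar char2 k n_gt0 frobn hn halpha_sub hbeta c.
have M_additive := polarQ_additive char2 n e m k alpha c.
rewrite (spectrum_iff_ker hF n_gt0 f_bit f_polar M_additive).
rewrite (card_ker_scaled (Lmap n e m k c) halpha0).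
exact: (card_kerL_iff k hF hn he hm c).
Qed.
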